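(* Let $f$ be a probability density on $\mathbb{R}$ symmetric about $0$, let $G$ be an absolutely continuous cumulative distribution function on $\mathbb{R}$ symmetric about $0$ (i.e. $G(-x)=1-G(x)$) with density $g$, and let $\omega:\mathbb{R}\to\mathbb{R}$ be an odd function with $\omega(x)>0$ for $x>0$. For $\lambda\in\mathbb{R}$ define $$M_{TV}(\lambda)=\operatorname{sign}(\lambda)\,\frac12\int_{\mathbb{R}}\bigl|2G(\lambda\,\omega(x))-1\bigr|\,f(x)\,dx .$$ Suppose that $g$ is a bounded probability density and that $\int_0^\infty \omega(x)f(x)\,dx<\infty$. Then the $BTV(1,1)$ prior, i.e. the density $\pi_{TV}(\lambda\mid 1,1)=\frac{d}{d\lambda}M_{TV}(\lambda)$, is well defined for all $\lambda\in\mathbb{R}$ and is given by $$\pi_{TV}(\lambda\mid 1,1)=2\int_0^\infty \omega(x)\,f(x)\,g(\lambda\,\omega(x))\,dx .$$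
   Context: Skew-symmetric densities are $s_{f;G}(x;\mu,\sigma,\lambda)=\frac{2}{\sigma}f\left(\frac{x-\mu}{\sigma}\right)G\left(\lambda\,\omega\left(\frac{x-\mu}{\sigma}\right)\right)$, $x\in\mathbb{R}$, with $\mu\in\mathbb{R}$, $\sigma>0$, $\lambda\in\mathbb{R}$. $M_{TV}(\lambda)$ is $\operatorname{sign}(\lambda)$ times the total variation distance between $f$ and $s_{f;G}(\cdot;0,1,\lambda)$; it is an increasing map of $\mathbb{R}$ onto $(-1/2,1/2)$. The $BTV(\alpha,\beta)$ prior on $\lambda$ is the prior induced on $\lambda$ by placing a Beta$(\alpha,\beta)$ distribution on $M_{TV}(\lambda)$ over $(-1/2,1/2)$ (density $\frac{1}{B(\alpha,\beta)}(u+\frac12)^{\alpha-1}(\frac12-u)^{\beta-1}$), i.e. with density $\pi_{TV}(\lambda\mid\alpha,\beta)=\frac{1}{B(\alpha,\beta)}(M_{TV}(\lambda)+\frac12)^{\alpha-1}(\frac12-M_{TV}(\lambda))^{\beta-1}\frac{d}{d\lambda}M_{TV}(\lambda)$; for $\alpha=\beta=1$ this is $\frac{d}{d\lambda}M_{TV}(\lambda)$. *)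

From HB Require Import structures.
From mathcomp Require Import all_boot all_order all_algebra.
From mathcomp Require Import all_classical all_reals all_analysis.
Set Implicit Arguments. Unset Strict Implicit. Unset Printing Implicit Defensive.
Import Order.TTheory GRing.Theory Num.Theory.
Import numFieldNormedType.Exports.
Local Open Scope classical_set_scope.
Local Open Scope ring_scope.

Definition RInt (R : realType) (D : set R) (h : R -> R) : R :=
  fine (\int[@lebesgue_measure R]_(x in D) (h x)%:E)%E.

Definition M_TV (R : realType) (f G w : R -> R) (lam : R) : R :=
  Num.sg lam * (2^-1 * RInt setT (fun x => `|2 * G (lam * w x) - 1| * f x)).

Definition prob_density (R : realType) (h : R -> R) : Prop :=
  measurable_fun setT h /\ (forall x, 0 <= h x) /\
  (\int[@lebesgue_measure R]_(x in setT) (h x)%:E = 1)%E.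

From HB Require Import structures.
From mathcomp Require Import all_boot all_order all_algebra.
From mathcomp Require Import all_classical all_reals all_analysis.
From mathcomp Require Import measurable_realfun lra ring.
Import Order.TTheory GRing.Theory Num.Theory.
Import numFieldNormedType.Exports.
Local Open Scope classical_set_scope.
Local Open Scope ring_scope.

(** Since [G] is symmetric, [|2 G(l w(x)) - 1| = sg(l) (2 G(l |w(x)|) - 1)], so
    [M_TV(l)] is the integral of [(G(l |w(x)|) - 1/2) f(x)], in which the sign of
    [l] has disappeared.  The derivative in [l] of this integrand is
    [|w(x)| g(l |w(x)|) f(x)], dominated uniformly in [l] by [M |w(x)| f(x)] for a
    bound [M] of [g], and integrable because [w f] is integrable on the half-line
    and [|w| f] is even; so we may differentiate under the integral sign, and
    folding the even integrand onto [[0, +oo[] gives the factor 2. *)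

Lemma ge0_integral_even (R : realType) (h : R -> R) :
  measurable_fun setT h -> (forall x, 0 <= h x) -> (forall x, h (- x) = h x) ->
  (\int[@lebesgue_measure R]_(x in setT) (h x)%:E =
   2%:E * \int[@lebesgue_measure R]_(x in `[0%R, +oo[) (h x)%:E)%E.
Proof.
move=> mh h_ge0 h_even.
rewrite -(setUv (`[0%R, +oo[ : set R)) ge0_integral_setU//=; first last.
- exact/disj_setPCl.
- by move=> x _; rewrite lee_fin.
- by rewrite setUv; exact/measurable_EFinP.
- exact: measurableC.
rewrite (_ : 2%:E = 2%:R%:E)// mule_natl mule2n; congr +%E.
rewrite setCitvr /= integral_itv_bndo_bndc; last first.
  by apply/measurable_EFinP; exact: measurable_funTS.
rewrite [in RHS]ge0_integration_by_substitution0; first last.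
- by move=> x; rewrite lee_fin.
- exact/measurable_EFinP.
by apply: eq_integral => x _; rewrite h_even.
Qed.

Lemma is_derive_Rintegral {R : realType} {d} {Y : measurableType d}
    {mu : {measure set Y -> \bar R}} {B : set Y} {f df : R -> Y -> R}
    {G : Y -> R} (a : R) :
  measurable B -> (forall x, mu.-integrable B (EFin \o f x)) ->
  (forall (x : R) (y : Y), is_derive x 1 (f ^~ y) (df x y)) ->
  (forall y, 0 <= G y) -> mu.-integrable B (EFin \o G) ->
  (forall x y, B y -> `|df x y| <= G y) ->
  is_derive a 1 (fun x => \int[mu]_(y in B) f x y) (\int[mu]_(y in B) df a y).
Proof.
move=> mB f_int f_df G_ge0 G_int df_le.
have a_in : `]a - 1, a + 1[%classic a.
  by rewrite /= in_itv /=; apply/andP; split; lra.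
have f_der x y : derivable (f ^~ y) x 1 by have [] := f_df x y.
have d1f_le x y : `]a - 1, a + 1[%classic x -> B y -> `|partial1of2 f x y| <= G y.
  by move=> _ By; rewrite partial1of2E derive_val df_le.
apply: DeriveDef.
  exact: (derivable_under_integral mB a_in _ _ G_ge0 G_int d1f_le).
rewrite -derive1E (differentiation_under_integral mB a_in _ _ G_ge0 G_int d1f_le)//.
by apply: eq_Rintegral => y _; rewrite partial1of2E derive_val.
Qed.

Section symmetric_cdf.
Context {R : realType} {G g : R -> R}.
Hypothesis G_derive : forall x : R, is_derive x (1 : R) G (g x).
Hypothesis G_sym : forall x, G (- x) = 1 - G x.

Lemma symmetric_cdf0 : G 0 = 2^-1.
Proof. by have := G_sym 0; rewrite oppr0; lra. Qed.

Lemma cdf_continuous : continuous G.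
Proof.
move=> x; apply: differentiable_continuous; apply/derivable1_diffP.
by have [] := G_derive x.
Qed.

Lemma cdf_measurable : measurable_fun setT G.
Proof. exact: continuous_measurable_fun cdf_continuous. Qed.

Lemma is_derive_cdf_dilate (c k a x : R) :
  is_derive x 1 (fun l => (G (l * c) - k) * a) (c * g (x * c) * a).
Proof.
have dilate : is_derive x 1 (fun l : R => l * c) c.
  apply: is_derive_eq (is_deriveM (is_derive_id x 1) (is_derive_cst c x 1)) _.
  by rewrite scaler0 add0r /GRing.scale /= mulr1.
have := is_deriveZ a (is_deriveB (@is_derive1_comp _ G _ x _ c (G_derive (x * c)) dilate)
  (is_derive_cst k x 1)).
have -> : a \*: (G \o (fun l => l * c) - cst k) = (fun l => (G (l * c) - k) * a).
  by apply/funext => l /=; rewrite mulrC.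
by move/is_derive_eq; apply; rewrite /GRing.scale /= subr0; ring.
Qed.

Hypothesis g_ge0 : forall x, 0 <= g x.

Lemma cdf_nondecreasing : {homo G : x y / x <= y}.
Proof.
move=> x y xy; apply: (@ger0_derive1_ndecr _ G x y) => //.
- by move=> z _; rewrite derive1E derive_val.
- exact/continuous_subspaceT/cdf_continuous.
Qed.

Lemma norm_twice_cdf_sub1 (l c : R) :
  `|2 * G (l * c) - 1| = Num.sg l * (2 * (G (l * `|c|) - 2^-1)).
Proof.
pose H z := 2 * G z - 1.
have H_odd z : H (- z) = - H z by rewrite /H G_sym; lra.
have H0 : H 0 = 0 by rewrite /H symmetric_cdf0 mulfV // subrr.
have H_ge0 z : 0 <= z -> 0 <= H z.
  by move=> /cdf_nondecreasing; rewrite symmetric_cdf0 /H; lra.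
have norm_H z : `|H z| = Num.sg z * H z.
  have [z_lt0|z_gt0|->] := ltrgtP z 0.
  - by rewrite ltr0_sg // mulN1r -normrN -H_odd ger0_norm // H_ge0 // oppr_ge0 ltW.
  - by rewrite gtr0_sg // mul1r ger0_norm // H_ge0 // ltW.
  - by rewrite H0 normr0 sgr0 mul0r.
have -> : 2 * (G (l * `|c|) - 2^-1) = H (l * `|c|) by rewrite /H mulrBr mulfV.
have -> : `|2 * G (l * c) - 1| = `|H (l * `|c|)|.
  have [c_ge0|c_lt0] := leP 0 c; first by rewrite (ger0_norm c_ge0).
  by rewrite (ltr0_norm c_lt0) mulrN H_odd normrN.
rewrite norm_H sgrM; have [->|c_neq0] := eqVneq c 0.
  by rewrite normr0 mulr0 H0 !mulr0.
by rewrite sgr_norm c_neq0 mulr1.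
Qed.

Hypothesis G_ge0 : forall x, 0 <= G x.

Lemma norm_cdf_sub_half_le1 (x : R) : `|G x - 2^-1| <= 1.
Proof. by have := G_ge0 (- x); have := G_ge0 x; rewrite G_sym ler_norml; lra. Qed.

End symmetric_cdf.

Lemma integrable_prob_density {R : realType} {h : R -> R} :
  prob_density h -> (@lebesgue_measure R).-integrable setT (EFin \o h).
Proof.
case=> h_meas [h_ge0 h_int1]; apply/integrableP; split; first exact/measurable_EFinP.
under eq_integral do rewrite abse_EFin ger0_norm //.
by rewrite h_int1 ltry.
Qed.

Section tv_derivative.
Context {R : realType} {f G g w : R -> R} {M : R}.
Local Notation mu := (@lebesgue_measure R).
Hypotheses (f_meas : measurable_fun setT f) (f_ge0 : forall x, 0 <= f x).
Hypotheses (f_int : mu.-integrable setT (EFin \o f)) (f_even : forall x, f (- x) = f x).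
Hypotheses (g_meas : measurable_fun setT g) (g_ge0 : forall x, 0 <= g x).
Hypothesis g_le : forall x, g x <= M.
Hypothesis G_derive : forall x : R, is_derive x (1 : R) G (g x).
Hypotheses (G_sym : forall x, G (- x) = 1 - G x) (G_ge0 : forall x, 0 <= G x).
Hypotheses (w_meas : measurable_fun setT w) (w_odd : forall x, w (- x) = - w x).
Hypothesis w_pos : forall x, 0 < x -> 0 < w x.
Hypothesis wf_int : (\int[mu]_(x in `[0%R, +oo[) (w x * f x)%:E < +oo)%E.

Definition centered_tv (l y : R) := (G (l * `|w y|) - 2^-1) * f y.

Lemma integrable_centered_tv (l : R) : mu.-integrable setT (EFin \o centered_tv l).
Proof.
apply: le_integrable f_int => //.
- apply/measurable_EFinP/measurable_funM => //; apply: measurable_funB => //.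
  apply: measurableT_comp; first exact: cdf_measurable G_derive.
  exact/measurable_funM/measurableT_comp.
- move=> x _; rewrite /= lee_fin normrM (ger0_norm (f_ge0 x)).
  by rewrite ler_piMl // norm_cdf_sub_half_le1.
Qed.

Lemma M_TV_centered : M_TV f G w = fun l => \int[mu]_(y in setT) centered_tv l y.
Proof.
apply/funext => l; rewrite /M_TV /RInt.
have [->|l_neq0] := eqVneq l 0.
  rewrite sgr0 mul0r /Rintegral integral0_eq // => x _.
  by rewrite /centered_tv mul0r symmetric_cdf0 // subrr mul0r.
have tv_centered x : `|2 * G (l * w x) - 1| * f x = (Num.sg l * 2) * centered_tv l x.
  by rewrite (norm_twice_cdf_sub1 G_derive G_sym g_ge0) /centered_tv; ring.
under eq_integral do rewrite tv_centered EFinM.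
rewrite integralZl //; last exact: integrable_centered_tv.
rewrite fineM //; last exact/integrable_fin_num/integrable_centered_tv.
have sg_sqr : Num.sg l * Num.sg l = 1 by rewrite -expr2 sqr_sg l_neq0.
suff -> : forall a : R, Num.sg l * (2^-1 * (Num.sg l * 2 * a)) = Num.sg l * Num.sg l * a.
  by rewrite sg_sqr mul1r.
by move=> a; field.
Qed.

Lemma odd_pos_ge0 (x : R) : 0 <= x -> 0 <= w x.
Proof.
rewrite le_eqVlt => /predU1P[<-|/w_pos/ltW //].
by have := w_odd 0; rewrite oppr0; lra.
Qed.

Lemma integrable_absw_f : mu.-integrable setT (fun x => (`|w x| * f x)%:E).
Proof.
apply/integrableP; split.
  by apply/measurable_EFinP/measurable_funM => //; exact: measurableT_comp.
under eq_integral do rewrite abse_EFin ger0_norm ?mulr_ge0 //.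
rewrite ge0_integral_even //; first last.
- by move=> x; rewrite w_odd normrN f_even.
- by move=> x; rewrite mulr_ge0.
- by apply: measurable_funM => //; exact: measurableT_comp.
under eq_integral => x /[!inE] /= /[!in_itv] /= /andP[/odd_pos_ge0 wx_ge0 _].
  rewrite (ger0_norm wx_ge0); over.
exact: lte_mul_pinfty.
Qed.

Lemma integrable_w_f_g (l : R) :
  mu.-integrable `[0%R, +oo[ (fun x => (w x * f x * g (l * w x))%:E).
Proof.
have Mwf_int : mu.-integrable `[0%R, +oo[ (fun x => (M * (`|w x| * f x))%:E).
  apply: (@integrableS _ _ _ _ setT) => //.
  under eq_fun do rewrite EFinM.
  exact/integrableZl/integrable_absw_f.
apply: le_integrable Mwf_int => //.
  apply/measurable_EFinP/measurable_funTS/measurable_funM => //.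
    exact: measurable_funM.
  exact/measurableT_comp/measurable_funM.
move=> x; rewrite /= in_itv /= andbT => /odd_pos_ge0 wx_ge0.
rewrite lee_fin (ger0_norm wx_ge0) !ger0_norm ?mulr_ge0 //.
  by rewrite mulrC ler_wpM2r // mulr_ge0.
exact: le_trans (g_ge0 0) (g_le 0).
Qed.

Lemma is_derive_M_TV (l : R) :
  is_derive l 1 (M_TV f G w) (\int[mu]_(y in setT) (`|w y| * g (l * `|w y|) * f y)).
Proof.
rewrite M_TV_centered.
have := is_derive_Rintegral l (mu := mu) (B := setT) (f := centered_tv)
  (df := fun x y => `|w y| * g (x * `|w y|) * f y) (G := fun y => M * (`|w y| * f y)).
apply=> //.
- exact: integrable_centered_tv.
- by move=> x y; exact: is_derive_cdf_dilate.
- by move=> y; rewrite mulr_ge0 ?mulr_ge0 // (le_trans (g_ge0 0) (g_le 0)).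
- rewrite /comp; under eq_fun do rewrite EFinM.
  exact/integrableZl/integrable_absw_f.
move=> x y _; rewrite !normrM normr_id (ger0_norm (g_ge0 _)) (ger0_norm (f_ge0 _)).
by rewrite mulrAC [M * _]mulrC ler_wpM2l ?mulr_ge0.
Qed.

Lemma Rintegral_derivative_M_TV (l : R) :
  \int[mu]_(y in setT) (`|w y| * g (l * `|w y|) * f y) =
  2 * RInt `[0%R, +oo[ (fun x => w x * f x * g (l * w x)).
Proof.
rewrite /Rintegral ge0_integral_even //; first last.
- by move=> y; rewrite w_odd normrN f_even.
- by move=> y; rewrite !mulr_ge0.
- apply: measurable_funM => //; apply: measurable_funM; first exact: measurableT_comp.
  exact/measurableT_comp/measurable_funM/measurableT_comp.
under eq_integral => y /[!inE] /= /[!in_itv] /= /andP[/odd_pos_ge0 wy_ge0 _].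
  rewrite (ger0_norm wy_ge0) mulrAC; over.
by rewrite fineM //; exact/integrable_fin_num/integrable_w_f_g.
Qed.

End tv_derivative.

Theorem lemma1 (R : realType) (f G g w : R -> R)
  (* f: probability density symmetric about 0 *)
  (hf : prob_density f) (hfsym : forall x, f (- x) = f x)
  (* g: bounded probability density *)
  (hg : prob_density g) (hgbd : exists M : R, forall x, g x <= M)
  (* G: absolutely continuous cdf with density g: G(x) = int_{-oo}^x g,
     and G' = g (everywhere) *)
  (hGint : forall x, ((G x)%:E = \int[@lebesgue_measure R]_(t in `]-oo, x]) (g t)%:E)%E)
  (hGder : forall x : R, is_derive x (1 : R) G (g x))
  (* G symmetric about 0 *)
  (hGsym : forall x, G (- x) = 1 - G x)
  (* omega odd, positive on (0, oo) *)
  (hwmeas : measurable_fun setT w)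
  (hwodd : forall x, w (- x) = - w x) (hwpos : forall x, 0 < x -> 0 < w x)
  (* int_0^oo omega f < oo *)
  (hwf : (\int[@lebesgue_measure R]_(x in `[0%R, +oo[) (w x * f x)%:E < +oo)%E) :
  forall lam : R,
    (@lebesgue_measure R).-integrable `[0%R, +oo[
        (fun x => (w x * f x * g (lam * w x))%:E) /\
    is_derive lam (1 : R) (M_TV f G w)
      (2 * RInt `[0%R, +oo[ (fun x => w x * f x * g (lam * w x))).
Proof.
move=> lam.
have f_int := integrable_prob_density hf.
have [f_meas [f_ge0 _]] := hf; have [g_meas [g_ge0 _]] := hg; have [M g_le] := hgbd.
have G_ge0 x : 0 <= G x.
  by rewrite -lee_fin hGint; apply: integral_ge0 => t _; rewrite lee_fin.
split; first by apply: (integrable_w_f_g (M := M)).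
rewrite -(Rintegral_derivative_M_TV (M := M)) //.
by apply: (is_derive_M_TV (M := M)).
Qed.
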